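(* Consider incentivized exploration with two arms and $\mu_1^0\ge\mu_2^0$, and let ALG be any bandit algorithm. Algorithm RepeatedHiddenExploration with ALG, initial exploration length $N_0$ and exploration probability $\varepsilon>0$ is Bayesian incentive-compatible as long as $\varepsilon\le\frac13\,\mathbb{E}[G\cdot\mathbf{1}\{G>0\}]$, where $G=\mathbb{E}[\mu_2-\mu_1\mid\mathcal{S}_{N_0+1}]$ and $\mathcal{S}_{N_0+1}$ consists of the first $N_0$ samples (rewards) of arm $1$.
   Context: Two arms; $\mu=(\mu_1,\mu_2)\in[0,1]^2$ is drawn from a prior $\mathcal{P}$ (possibly correlated); a known family of reward distributions $(\mathcal{D}_x)_{x\in[0,1]}$ on $[0,1]$, each with mean $x$ and finitely many values; choosing arm $a$ yields an independent reward from $\mathcal{D}_{\mu_a}$. $\mu_a^0=\mathbb{E}[\mu_a]$. In each round $t$ the algorithm recommends an arm $\mathrm{rec}_t$, an agent chooses $a_t$ and receives reward $r_t$, which the algorithm observes. Let $\mathcal{E}_{t-1}=\{a_s=\mathrm{rec}_s\ \forall s\in[t-1]\}$. An algorithm is Bayesian incentive-compatible (BIC) if for every round $t$ and distinct arms $a,a'$ with $\Pr[\mathrm{rec}_t=a,\mathcal{E}_{t-1}]>0$ we have $\mathbb{E}[\mu_a-\mu_{a'}\mid\mathrm{rec}_t=a,\mathcal{E}_{t-1}]\ge0$ (agents comply with BIC recommendations). RepeatedHiddenExploration: in the first $N_0$ rounds recommend arm $1$; in each subsequent round $t$, with probability $\varepsilon$ (independently) call ALG, recommend the arm it chooses and feed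 it the resulting reward (exploration round); otherwise recommend $\min\big(\arg\max_{a\in\{1,2\}}\mathbb{E}[\mu_a\mid\mathcal{S}_t]\big)$, where $\mathcal{S}_t$ is the tuple $(s,a_s,r_s)$ over all previous exploration rounds $s<t$, including the first $N_0$ rounds. *)

From HB Require Import structures.
From mathcomp Require Import all_boot all_order all_algebra.
From mathcomp Require Import all_classical all_reals all_analysis.
Set Implicit Arguments. Unset Strict Implicit. Unset Printing Implicit Defensive.
Import Order.TTheory GRing.Theory Num.Theory.
Local Open Scope ring_scope.

Definition arm := bool.
Definition arm1 : arm := false.
Definition arm2 : arm := true.

Section RHE.
Context (R : realType) (d : measure_display) (T : measurableType d).
(* The prior: mu = (mu1, mu2) is a random vector on the probability space (T, P). *)
Context (P : probability T R) (mu1 mu2 : T -> R).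
(* Reward distributions: D x v = probability that a reward drawn from D_x equals
   the value [rv v]; V is the (finite) set of possible reward outcomes. *)
Context (V : finType) (rv : V -> R) (D : R -> V -> R).
(* ALG: a (possibly randomized) bandit algorithm, given by the probability
   that it pulls arm 2 given its own history of (arm, reward) observations. *)
Context (alg : seq (arm * V) -> R).
Context (N0 : nat) (eps : R).

Definition Ex (f : T -> R) : R := fine (\int[P]_w (f w)%:E).

Definition muw (w : T) : arm -> R := fun b => if b then mu2 w else mu1 w.

Definition algP (h : seq (arm * V)) (b : arm) : R :=
  if b then alg h else 1 - alg h.

(* A history S_t is recorded as the sequence, over rounds 1..t-1, of
   [Some (a_s, r_s)] for exploration rounds and [None] for exploitation rounds. *)
Definition algHist (sig : seq (option (arm * V))) : seq (arm * V) :=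
  pmap id (drop N0 sig).

(* probability of the event that round r+1 contributes [o] to S, given the
   earlier part [hist] of S and the mean vector m *)
Definition stepP (r : nat) (hist : seq (option (arm * V))) (o : option (arm * V))
  (m : arm -> R) : R :=
  if (r < N0)%N then
    match o with Some (b, v) => if b then 0 else D (m arm1) v | None => 0 end
  else
    match o with
    | Some (b, v) => eps * algP (algHist hist) b * D (m b) v
    | None => 1 - eps
    end.

(* Pr[ S_{size sig + 1} = sig | mu = m ] *)
Definition pS (sig : seq (option (arm * V))) (m : arm -> R) : R :=
  \prod_(r < size sig) stepP r (take r sig) (nth None sig r) m.

(* E[ mu_b | S = sig ] (elementary conditional expectation; = 0 if Pr = 0) *)
Definition postMean (sig : seq (option (arm * V))) (b : arm) : R :=
  Ex (fun w => muw w b * pS sig (muw w)) / Ex (fun w => pS sig (muw w)).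

(* min (argmax_a E[mu_a | S]) : arm 2 only if strictly better *)
Definition exploitArm (sig : seq (option (arm * V))) : arm :=
  postMean sig arm1 < postMean sig arm2.

(* Pr[ rec_t = a | S_t = sig ], t = size sig + 1 *)
Definition recProb (sig : seq (option (arm * V))) (a : arm) : R :=
  if (size sig < N0)%N then (a == arm1)%:R
  else eps * algP (algHist sig) a + (1 - eps) * (exploitArm sig == a)%:R.

(* Pr[ rec_t = a | mu = m ]  (rounds t >= 1) *)
Definition pRec (t : nat) (a : arm) (m : arm -> R) : R :=
  \sum_(sig : (t.-1).-tuple (option (arm * V))) pS sig m * recProb sig a.

Definition PrRec (t : nat) (a : arm) : R := Ex (fun w => pRec t a (muw w)).

(* E[ mu_a - mu_{a'} | rec_t = a ], a' the other arm *)
Definition condGain (t : nat) (a : arm) : R :=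
  Ex (fun w => (muw w a - muw w (~~ a)) * pRec t a (muw w)) / PrRec t a.

(* E[ G * 1{G > 0} ], G = E[mu2 - mu1 | S_{N0+1}] *)
Definition EGplus : R :=
  \sum_(sig : N0.-tuple (option (arm * V)))
    Ex (fun w => pS sig (muw w)) *
    (let g := postMean sig arm2 - postMean sig arm1 in if 0 < g then g else 0).

(* Bayesian incentive-compatibility of RepeatedHiddenExploration
   (agents comply, so E_{t-1} holds with probability one). *)
Definition BIC_RHE : Prop :=
  forall (t : nat) (a : arm), (0 < t)%N -> 0 < PrRec t a -> 0 <= condGain t a.

End RHE.

From Pilot Require Import Defs.
From mathcomp Require Import all_boot all_order all_algebra.
From mathcomp Require Import all_classical all_reals all_analysis.
From mathcomp Require Import measurable_realfun ring lra.
Import Order.TTheory GRing.Theory Num.Theory.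
Set Implicit Arguments. Unset Strict Implicit. Unset Printing Implicit Defensive.
Local Open Scope ring_scope.

(* Write [histProb s] for the probability that the record of exploration rounds is
   [s], and [histGap a s] for E[(mu_a - mu_a') 1{S = s}], so that their ratio is the
   posterior gap consulted by the exploitation step.  Extending the record by one round
   splits [histGap a s] among the extensions (a martingale), so the sum of positive parts
   [gapPlus a n] over records of length n is nondecreasing in n; for arm 2 and n = N0 it
   is E[G 1{G > 0}].  After the first N0 rounds, exploitation recommends a exactly when
   the gap of a is positive, so it contributes at least (1 - eps) E[G 1{G > 0}] to
   E[(mu_a - mu_a') 1{rec = a}] (for arm 1 because mu_1^0 >= mu_2^0), while exploration
   loses at most eps; eps <= E[G 1{G > 0}] / 3 makes the total nonnegative.  During the
   first N0 rounds arm 1 is recommended, which is compatible since mu_1^0 >= mu_2^0. *)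

Section BigTuple.
Context (R : Type) (idx : R) (op : Monoid.com_law idx).

Lemma big_option (Y : finType) (F : option Y -> R) :
  \big[op/idx]_(o : option Y) F o = op (F None) (\big[op/idx]_(y : Y) F (Some y)).
Proof.
rewrite (bigD1 None) //=; congr (op _ _).
rewrite (reindex_omap Some id) /=; last by case.
by apply: eq_bigl => y; rewrite eqxx.
Qed.

Lemma big_tuple0 (X : finType) (F : seq X -> R) :
  \big[op/idx]_(s : 0.-tuple X) F s = F [::].
Proof. by rewrite (big_pred1 [tuple]) // => s; rewrite [s]tuple0; apply/esym/eqP. Qed.

Lemma big_tuple_rcons (X : finType) n (F : seq X -> R) :
  \big[op/idx]_(s : n.+1.-tuple X) F s =
  \big[op/idx]_(s : n.-tuple X) \big[op/idx]_(x : X) F (rcons s x).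
Proof.
rewrite pair_big /=.
pose h (p : n.-tuple X * X) : n.+1.-tuple X := [tuple of rcons p.1 p.2].
have h_inj : injective h.
  move=> [s x] [s' x'] /(congr1 val) /eqP /=.
  by rewrite eqseq_rcons => /andP[/eqP/val_inj -> /eqP ->].
have h_bij : bijective h.
  by apply: (inj_card_bij h_inj); rewrite card_prod !card_tuple expnS mulnC.
by rewrite (reindex h) //; apply: onW_bij.
Qed.

End BigTuple.

Lemma maxr0N (R : realDomainType) (x : R) : Num.max 0 (- x) - Num.max 0 x = - x.
Proof. by case: (ltP 0 x) => x_gt0; case: (ltP 0 (- x)) => Nx_gt0; lra. Qed.

Section BoundedExpectation.
Context (R : realType) (d : measure_display) (T : measurableType d)
  (P : probability T R).

Definition bounded_mfun (f : T -> R) :=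
  measurable_fun setT f /\ exists M : R, forall w, `|f w| <= M.

Lemma bounded_mfun_integrable f :
  bounded_mfun f -> P.-integrable setT (EFin \o f).
Proof.
move=> [mf [M f_le]]; apply/integrableP; split; first exact/measurable_EFinP.
have M_ge0 : 0 <= M by apply: le_trans (f_le point).
apply: (@le_lt_trans _ _ (M%:E * P setT)%E); last first.
  by rewrite probability_setT mule1 ltry.
apply: integral_le_bound => //; first exact/measurable_EFinP.
by apply: aeW => w _; rewrite /= lee_fin.
Qed.

Lemma bounded_mfun_cst c : bounded_mfun (fun=> c).
Proof. by split; [exact: measurable_cst | exists `|c|]. Qed.

Lemma bounded_mfunD f g :
  bounded_mfun f -> bounded_mfun g -> bounded_mfun (fun w => f w + g w).
Proof.
move=> [mf [M f_le]] [mg [N g_le]]; split; first exact: measurable_funD.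
by exists (M + N) => w; apply: le_trans (ler_normD _ _) (lerD _ _).
Qed.

Lemma bounded_mfunN f : bounded_mfun f -> bounded_mfun (fun w => - f w).
Proof.
move=> [mf [M f_le]]; split; first exact: measurable_funN.
by exists M => w; rewrite normrN.
Qed.

Lemma bounded_mfunB f g :
  bounded_mfun f -> bounded_mfun g -> bounded_mfun (fun w => f w - g w).
Proof. by move=> bf bg; apply/bounded_mfunD/bounded_mfunN. Qed.

Lemma bounded_mfunM f g :
  bounded_mfun f -> bounded_mfun g -> bounded_mfun (fun w => f w * g w).
Proof.
move=> [mf [M f_le]] [mg [N g_le]]; split; first exact: measurable_funM.
by exists (M * N) => w; rewrite normrM ler_pM.
Qed.

Lemma bounded_mfun_sum (I : Type) (s : seq I) (F : I -> T -> R) :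
  (forall i, bounded_mfun (F i)) -> bounded_mfun (fun w => \sum_(i <- s) F i w).
Proof.
move=> bF; elim: s => [|i s IH].
  by under eq_fun do rewrite big_nil; apply: bounded_mfun_cst.
by under eq_fun do rewrite big_cons; apply: bounded_mfunD.
Qed.

Lemma bounded_mfun_prod (I : Type) (s : seq I) (F : I -> T -> R) :
  (forall i, bounded_mfun (F i)) -> bounded_mfun (fun w => \prod_(i <- s) F i w).
Proof.
move=> bF; elim: s => [|i s IH].
  by under eq_fun do rewrite big_nil; apply: bounded_mfun_cst.
by under eq_fun do rewrite big_cons; apply: bounded_mfunM.
Qed.

Lemma eq_Ex f g : (forall w, f w = g w) -> Ex P f = Ex P g.
Proof. by move=> fg; congr Ex; apply: funext. Qed.

Lemma Ex_cst c : Ex P (fun=> c) = c.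
Proof. by rewrite /Ex integral_cst //= probability_setT mule1. Qed.

Lemma ExD f g : bounded_mfun f -> bounded_mfun g ->
  Ex P (fun w => f w + g w) = Ex P f + Ex P g.
Proof.
by move=> bf bg; rewrite /Ex -!/(Rintegral _ _ _) RintegralD // bounded_mfun_integrable.
Qed.

Lemma ExZ c f : bounded_mfun f -> Ex P (fun w => c * f w) = c * Ex P f.
Proof.
by move=> bf; rewrite /Ex -!/(Rintegral _ _ _) RintegralZl // bounded_mfun_integrable.
Qed.

Lemma ExN f : bounded_mfun f -> Ex P (fun w => - f w) = - Ex P f.
Proof. by move=> bf; rewrite -mulN1r -ExZ //; apply: eq_Ex => w; rewrite mulN1r. Qed.

Lemma ExB f g : bounded_mfun f -> bounded_mfun g ->
  Ex P (fun w => f w - g w) = Ex P f - Ex P g.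
Proof. by move=> bf bg; rewrite ExD ?ExN //; apply: bounded_mfunN. Qed.

Lemma le_Ex f g : bounded_mfun f -> bounded_mfun g ->
  (forall w, f w <= g w) -> Ex P f <= Ex P g.
Proof.
by move=> bf bg fg; rewrite /Ex -!/(Rintegral _ _ _) le_Rintegral // bounded_mfun_integrable.
Qed.

Lemma Ex_sum (I : Type) (s : seq I) (F : I -> T -> R) :
  (forall i, bounded_mfun (F i)) ->
  Ex P (fun w => \sum_(i <- s) F i w) = \sum_(i <- s) Ex P (F i).
Proof.
move=> bF; elim: s => [|i s IH].
  by rewrite big_nil -[RHS](Ex_cst 0); apply: eq_Ex => w; rewrite big_nil.
rewrite big_cons -IH -ExD //; last exact: bounded_mfun_sum.
by apply: eq_Ex => w; rewrite big_cons.
Qed.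

End BoundedExpectation.

Section HistoryModel.
Context (R : realType) (d : measure_display) (T : measurableType d)
  (P : probability T R) (mu1 mu2 : T -> R)
  (V : finType) (D : R -> V -> R)
  (alg : seq (arm * V) -> R) (N0 : nat) (eps : R).
Context (mmu1 : measurable_fun setT mu1) (mmu2 : measurable_fun setT mu2)
  (mu1_01 : forall w, 0 <= mu1 w <= 1) (mu2_01 : forall w, 0 <= mu2 w <= 1)
  (D_ge0 : forall x v, 0 <= x <= 1 -> 0 <= D x v)
  (sum_D : forall x, 0 <= x <= 1 -> \sum_v D x v = 1)
  (mD : forall v, measurable_fun (`[0%R, 1%R]%classic : set R) (D^~ v))
  (alg_01 : forall h, 0 <= alg h <= 1).

Local Notation X := (option (arm * V)).
Local Notation pS := (pS D alg N0 eps).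
Local Notation stepP := (stepP D alg N0 eps).
Local Notation mw := (muw mu1 mu2).
Local Notation Ex := (Ex P).

Lemma muw_01 w b : 0 <= mw w b <= 1.
Proof. by case: b; rewrite /muw. Qed.

Lemma algP_01 h b : 0 <= algP alg h b <= 1.
Proof.
by case: b; rewrite /algP; have /andP[? ?] := alg_01 h; apply/andP; split; lra.
Qed.

Lemma sum_stepP r h (m : arm -> R) : (forall b, 0 <= m b <= 1) ->
  \sum_(o : X) stepP r h o m = 1.
Proof.
move=> m_01; rewrite big_option.
rewrite (eq_bigr (fun p => stepP r h (Some (p.1, p.2)) m)); last by case.
rewrite -(pair_bigA _ (fun b v => stepP r h (Some (b, v)) m)) big_bool /Defs.stepP /=.
case: ifP => _.
  by rewrite big1 // add0r sum_D // add0r.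
by rewrite -!mulr_sumr !sum_D // /algP; lra.
Qed.

Lemma pS_rcons sig o m : pS (rcons sig o) m = pS sig m * stepP (size sig) sig o m.
Proof.
rewrite /Defs.pS size_rcons big_ord_recr -cats1 /= take_size_cat // nth_cat ltnn subnn.
congr (_ * _); apply: eq_bigr => i _.
by rewrite takel_cat ?nth_cat ?ltn_ord // ltnW.
Qed.

(* Only the steps after the first N0 rounds carry the weights [eps] and [1 - eps]. *)
Lemma pS_ge0 sig m : (forall b, 0 <= m b <= 1) ->
  (size sig <= N0)%N \/ 0 <= eps <= 1 -> 0 <= pS sig m.
Proof.
move=> m_01 sig_eps; apply: prodr_ge0 => i _; rewrite /Defs.stepP.
case: ifPn => i_N0.
  by case: (nth None sig i) => [[[] v]|] //; apply: D_ge0.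
have eps_01 : 0 <= eps <= 1.
  case: sig_eps => // sig_N0; move: i_N0.
  by rewrite -leqNgt => /(leq_trans sig_N0); rewrite leqNgt ltn_ord.
case: (nth None sig i) => [[b v]|]; last lra.
have /andP[? _] := algP_01 (algHist N0 (take i sig)) b.
by rewrite !mulr_ge0 ?D_ge0 //; lra.
Qed.

Lemma sum_pS_tuple n m : (forall b, 0 <= m b <= 1) ->
  \sum_(s : n.-tuple X) pS s m = 1.
Proof.
move=> m_01; elim: n => [|n IH].
  by rewrite (big_tuple0 _ (pS^~ m)) /Defs.pS big_ord0.
rewrite (big_tuple_rcons _ _ (pS^~ m)) -[RHS]IH; apply: eq_bigr => s _.
under eq_bigr do rewrite pS_rcons.
by rewrite -mulr_sumr sum_stepP // mulr1.
Qed.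

Lemma bounded_mfun_muw b : bounded_mfun (mw^~ b).
Proof.
split; first by case: b.
by exists 1 => w; have /andP[? ?] := muw_01 w b; rewrite ger0_norm.
Qed.

Lemma D_le1 x v : 0 <= x <= 1 -> D x v <= 1.
Proof.
move=> x_01; rewrite -(sum_D x_01) (bigD1 v) //= lerDl.
by apply: sumr_ge0 => i _; apply: D_ge0.
Qed.

Lemma bounded_mfun_D b v : bounded_mfun (fun w => D (mw w b) v).
Proof.
split.
  apply: (measurable_comp _ _ (mD v) (bounded_mfun_muw b).1) => //.
  by move=> _ [w _ <-]; rewrite /= in_itv /= muw_01.
by exists 1 => w; rewrite ger0_norm ?D_le1 ?D_ge0 ?muw_01.
Qed.

Lemma bounded_mfun_stepP r h o : bounded_mfun (fun w => stepP r h o (mw w)).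
Proof.
rewrite /Defs.stepP; case: (r < N0)%N; case: o => [[[] v]|];
  by [exact: bounded_mfun_cst | exact: bounded_mfun_D
     | exact: bounded_mfunM (bounded_mfun_cst _ _) (bounded_mfun_D _ v)].
Qed.

Lemma bounded_mfun_pS sig : bounded_mfun (fun w => pS sig (mw w)).
Proof. by apply: bounded_mfun_prod => i; apply: bounded_mfun_stepP. Qed.

Lemma bounded_mfun_gap a : bounded_mfun (fun w => mw w a - mw w (~~ a)).
Proof. exact/bounded_mfunB/bounded_mfun_muw/bounded_mfun_muw. Qed.

Lemma Ex_pS_rcons (h : T -> R) sig : bounded_mfun h ->
  \sum_(x : X) Ex (fun w => h w * pS (rcons sig x) (mw w)) =
  Ex (fun w => h w * pS sig (mw w)).
Proof.
move=> bh; rewrite -Ex_sum => [|x]; last exact/bounded_mfunM/bounded_mfun_pS.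
apply: eq_Ex => w; rewrite -mulr_sumr; under eq_bigr do rewrite pS_rcons.
by rewrite -mulr_sumr sum_stepP ?mulr1 //; apply: muw_01.
Qed.

Lemma Ex_pS_tuple (h : T -> R) n : bounded_mfun h ->
  \sum_(s : n.-tuple X) Ex (fun w => h w * pS s (mw w)) = Ex h.
Proof.
move=> bh; rewrite -Ex_sum => [|s]; last exact/bounded_mfunM/bounded_mfun_pS.
by apply: eq_Ex => w; rewrite -mulr_sumr sum_pS_tuple ?mulr1 //; apply: muw_01.
Qed.

Definition histProb sig := Ex (fun w => pS sig (mw w)).

Definition histGap a sig := Ex (fun w => (mw w a - mw w (~~ a)) * pS sig (mw w)).

Definition gapPlus a n := \sum_(s : n.-tuple X) Num.max 0 (histGap a s).

Lemma histGapN a sig : histGap (~~ a) sig = - histGap a sig.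
Proof.
rewrite -ExN; last exact/bounded_mfunM/bounded_mfun_pS/bounded_mfun_gap.
by apply: eq_Ex => w; rewrite negbK -mulNr opprB.
Qed.

Lemma sum_histProb n : \sum_(s : n.-tuple X) histProb s = 1.
Proof.
rewrite -[RHS](Ex_cst P 1) -(Ex_pS_tuple n (bounded_mfun_cst _ 1)).
by apply: eq_bigr => s _; apply: eq_Ex => w; rewrite mul1r.
Qed.

Lemma sum_histGap a n :
  \sum_(s : n.-tuple X) histGap a s = Ex (fun w => mw w a - mw w (~~ a)).
Proof. exact/Ex_pS_tuple/bounded_mfun_gap. Qed.

Lemma sum_histGap_rcons a sig : \sum_(x : X) histGap a (rcons sig x) = histGap a sig.
Proof. exact/Ex_pS_rcons/bounded_mfun_gap. Qed.

Lemma histProb_ge0 sig : (size sig <= N0)%N \/ 0 <= eps <= 1 -> 0 <= histProb sig.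
Proof.
move=> sig_eps; rewrite -(Ex_cst P 0).
apply: le_Ex (bounded_mfun_cst _ 0) (bounded_mfun_pS sig) _ => w.
by apply: pS_ge0 => // b; apply: muw_01.
Qed.

Lemma histGap_bound a sig : (size sig <= N0)%N \/ 0 <= eps <= 1 ->
  `|histGap a sig| <= histProb sig.
Proof.
move=> sig_eps; have pS_ge0 w : 0 <= pS sig (mw w).
  by apply: pS_ge0 => // b; apply: muw_01.
have bpS := bounded_mfun_pS sig.
have bgap := bounded_mfunM (bounded_mfun_gap a) bpS.
have gap_bound w : -1 <= mw w a - mw w (~~ a) <= 1.
  by have /andP[? ?] := muw_01 w a; have /andP[? ?] := muw_01 w (~~ a); lra.
rewrite /histGap /histProb ler_norml -ExN //; apply/andP; split.
  apply: le_Ex (bounded_mfunN bpS) bgap _ => w.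
  by have /andP[? ?] := gap_bound w; have := pS_ge0 w; nra.
apply: le_Ex bgap bpS _ => w.
by have /andP[? ?] := gap_bound w; have := pS_ge0 w; nra.
Qed.

Lemma le_gapPlus a : {homo gapPlus a : m n / (m <= n)%N >-> m <= n}.
Proof.
apply: homo_leq => [x|y x z|n]; [exact: lexx | exact: le_trans |].
rewrite /gapPlus (big_tuple_rcons _ _ (fun s => Num.max 0 (histGap a s))).
apply: ler_sum => s _; rewrite -sum_histGap_rcons ge_max.
apply/andP; split; first by apply: sumr_ge0 => x _; rewrite le_max lexx.
by apply: ler_sum => x _; rewrite le_max lexx orbT.
Qed.

Lemma le_gapPlus_arm n : Ex mu2 <= Ex mu1 -> gapPlus arm2 n <= gapPlus arm1 n.
Proof.
move=> Emu; rewrite -subr_ge0 /gapPlus -sumrB.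
under eq_bigr do rewrite (histGapN arm2) maxr0N.
rewrite sumrN sum_histGap oppr_ge0 ExB ?subr_le0; [exact: Emu | exact: bounded_mfun_muw..].
Qed.

Local Notation postMean := (postMean P mu1 mu2 D alg N0 eps).
Local Notation exploitArm := (exploitArm P mu1 mu2 D alg N0 eps).

Lemma postMean_gap sig :
  postMean sig arm2 - postMean sig arm1 = histGap arm2 sig / histProb sig.
Proof.
rewrite /Defs.postMean -mulrBl -ExB;
  try exact: bounded_mfunM (bounded_mfun_muw _) (bounded_mfun_pS sig).
by congr (_ / _); apply: eq_Ex => w; rewrite mulrBl.
Qed.

(* If [histProb sig = 0] the posterior means are the junk values [0 / 0 = 0],
   but then the gap vanishes too. *)
Lemma postMean_gap_gt0 sig : (size sig <= N0)%N \/ 0 <= eps <= 1 ->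
  (0 < postMean sig arm2 - postMean sig arm1) = (0 < histGap arm2 sig).
Proof.
move=> sig_eps; rewrite postMean_gap.
have := histGap_bound arm2 sig_eps; have := histProb_ge0 sig_eps.
rewrite le_eqVlt => /orP[/eqP <- | p_gt0]; last by rewrite pmulr_lgt0 ?invr_gt0.
by rewrite normr_le0 => /eqP ->; rewrite mul0r.
Qed.

Lemma exploitArmE sig : (size sig <= N0)%N \/ 0 <= eps <= 1 ->
  exploitArm sig = (0 < histGap arm2 sig).
Proof. by move=> sig_eps; rewrite /Defs.exploitArm -subr_gt0 postMean_gap_gt0. Qed.

Lemma EGplus_gapPlus : EGplus P mu1 mu2 D alg N0 eps = gapPlus arm2 N0.
Proof.
apply: eq_bigr => s _ /=.
have s_eps : (size s <= N0)%N \/ 0 <= eps <= 1 by left; rewrite size_tuple.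
have p_ge0 := histProb_ge0 s_eps; have g_le := histGap_bound arm2 s_eps.
rewrite -/(histProb s) postMean_gap_gt0 // postMean_gap.
case: (ltP 0 (histGap arm2 s)) => [g_gt0|_]; last by rewrite mulr0.
rewrite mulrCA mulfV ?mulr1 // gt_eqF //.
by apply: lt_le_trans g_gt0 (le_trans (ler_norm _) g_le).
Qed.

Lemma gapPlus_le1 a : gapPlus a N0 <= 1.
Proof.
rewrite -(sum_histProb N0); apply: ler_sum => s _.
have s_eps : (size s <= N0)%N \/ 0 <= eps <= 1 by left; rewrite size_tuple.
by rewrite ge_max histProb_ge0 //= (le_trans (ler_norm _) (histGap_bound a s_eps)).
Qed.

Local Notation pRec := (pRec P mu1 mu2 D alg N0 eps).
Local Notation recProb := (recProb P mu1 mu2 D alg N0 eps).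

Lemma Ex_gain_pRec t a :
  Ex (fun w => (mw w a - mw w (~~ a)) * pRec t a (mw w)) =
  \sum_(s : (t.-1).-tuple X) recProb s a * histGap a s.
Proof.
have bgap s := bounded_mfunM (bounded_mfun_gap a) (bounded_mfun_pS s).
transitivity (Ex (fun w => \sum_(s : (t.-1).-tuple X)
    recProb s a * ((mw w a - mw w (~~ a)) * pS s (mw w)))).
  by apply: eq_Ex => w; rewrite /Defs.pRec mulr_sumr; apply: eq_bigr => s _; ring.
rewrite Ex_sum => [|s]; last exact: bounded_mfunM (bounded_mfun_cst _ _) (bgap s).
by apply: eq_bigr => s _; rewrite ExZ.
Qed.

Lemma initial_gain_ge0 t a : (t.-1 < N0)%N -> Ex mu2 <= Ex mu1 ->
  0 <= \sum_(s : (t.-1).-tuple X) recProb s a * histGap a s.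
Proof.
move=> t_N0 Emu; under eq_bigr => s _ do rewrite /Defs.recProb size_tuple t_N0.
rewrite -mulr_sumr sum_histGap; case: a => /=; first by rewrite mul0r.
rewrite mul1r ExB ?subr_ge0;
  [exact: Emu | exact: (bounded_mfun_muw false) | exact: (bounded_mfun_muw true)].
Qed.

Lemma explore_gain_ge n a : 0 <= eps <= 1 ->
  -1 <= \sum_(s : n.-tuple X) algP alg (algHist N0 s) a * histGap a s.
Proof.
move=> eps_01; rewrite -(sum_histProb n) -sumrN; apply: ler_sum => s _.
have /andP[? ?] := algP_01 (algHist N0 s) a.
by have := @histGap_bound a s (or_intror eps_01); rewrite ler_norml => /andP[? ?]; nra.
Qed.

Lemma exploit_gap a sig : (size sig <= N0)%N \/ 0 <= eps <= 1 ->
  (exploitArm sig == a)%:R * histGap a sig = Num.max 0 (histGap a sig).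
Proof.
move=> sig_eps; rewrite exploitArmE //; set g := histGap arm2 sig; case: a => /=.
  by rewrite eqb_id; case: (ltP 0 g); rewrite ?mul1r ?mul0r.
rewrite (histGapN arm2) -/g eqbF_neg; case: (ltP 0 g) => g0 /=.
  by rewrite mul0r max_l // oppr_le0 ltW.
by rewrite mul1r max_r // oppr_ge0.
Qed.

Lemma exploit_gain_ge n a : 0 <= eps <= 1 -> (N0 <= n)%N -> Ex mu2 <= Ex mu1 ->
  gapPlus arm2 N0 <= \sum_(s : n.-tuple X) (exploitArm s == a)%:R * histGap a s.
Proof.
move=> eps_01 N0_n Emu.
rewrite (eq_bigr _ (fun (s : n.-tuple X) _ => @exploit_gap a s (or_intror eps_01))).
apply: le_trans (le_gapPlus arm2 N0_n) _.
by case: a => //; apply: le_gapPlus_arm.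
Qed.

Lemma Ex_gain_pRec_ge0 t a : Ex mu2 <= Ex mu1 -> 0 < eps ->
  eps <= EGplus P mu1 mu2 D alg N0 eps / 3 ->
  0 <= Ex (fun w => (mw w a - mw w (~~ a)) * pRec t a (mw w)).
Proof.
move=> Emu eps_gt0; rewrite EGplus_gapPlus Ex_gain_pRec => eps_le.
have [t_N0|N0_t] := ltnP t.-1 N0; first exact: initial_gain_ge0.
have G_le1 := gapPlus_le1 arm2.
have eps_01 : 0 <= eps <= 1 by apply/andP; split; lra.
under eq_bigr => s _ do rewrite /Defs.recProb size_tuple ltnNge N0_t /= mulrDl -!mulrA.
rewrite big_split -!mulr_sumr /=.
have := explore_gain_ge t.-1 a eps_01; have := exploit_gain_ge a eps_01 N0_t Emu.
nra.
Qed.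

End HistoryModel.

Theorem theorem11p16 (R : realType) (d : measure_display) (T : measurableType d)
  (P : probability T R) (mu1 mu2 : T -> R)
  (V : finType) (rv : V -> R) (D : R -> V -> R)
  (alg : seq (arm * V) -> R) (N0 : nat) (eps : R) :
  measurable_fun setT mu1 -> measurable_fun setT mu2 ->
  (forall w, 0 <= mu1 w <= 1) -> (forall w, 0 <= mu2 w <= 1) ->
  (forall v, 0 <= rv v <= 1) ->
  (forall x v, 0 <= x <= 1 -> 0 <= D x v) ->
  (forall x, 0 <= x <= 1 -> \sum_v D x v = 1) ->
  (forall x, 0 <= x <= 1 -> \sum_v D x v * rv v = x) ->
  (forall v, measurable_fun (`[0%R, 1%R]%classic : set R) (fun x : R => D x v)) ->
  (forall h, 0 <= alg h <= 1) ->
  Ex P mu2 <= Ex P mu1 ->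
  0 < eps ->
  eps <= EGplus P mu1 mu2 D alg N0 eps / 3 ->
  BIC_RHE P mu1 mu2 D alg N0 eps.
Proof.
(* The reward values [rv] and the means of the [D x] play no role: the argument
   only uses that each [D x] is a distribution depending measurably on [x]. *)
move=> mmu1 mmu2 mu1_01 mu2_01 _ D_ge0 sum_D _ mD alg_01 Emu eps_gt0 eps_le.
move=> t a _ PrRec_gt0; apply: divr_ge0 (ltW PrRec_gt0).
exact: (Ex_gain_pRec_ge0 mmu1 mmu2 mu1_01 mu2_01 D_ge0 sum_D mD alg_01).
Qed.
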